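(* For a positive integer $k$ let $A(k)=\{(\frac{c}{k},\frac{d}{k}): c,d\in\mathbb{N}\cup\{0\},\ \frac{c}{k}+\frac{d}{k}\le 1\}$, viewed as a collection of alternatives. Let $x\approx 0.39$ be the unique solution in $[0,\frac12]$ of $x^3-x+\frac13=0$. Then for every $k$ and every $\delta>0$, all pure Nash equilibrium outcomes of $\Gamma_{\mathcal{SA}_\delta}(A(k))$ are $(\delta+\frac1k)$-close to the segment $\mathrm{conv}((x,1-x),(1-x,x))$.
   Context: Two players bargain over a finite collection of alternatives $A=(a^j)_{j\in[n]}\subset[0,1]^2$, $a^j_i$ being player $i$'s utility. The mechanism $\mathcal{SA}_\delta$ ($0<\delta\le1$): each player submits $L_i\subseteq[n]$; the index is drawn from the uniform distribution $UN([n])$ if $L_1=L_2=\emptyset$; from $UN(L_1\cup L_2)$ if $L_1\cap L_2=\emptyset\ne L_1\cup L_2$; and from $(1-\delta)UN(L_1\cap L_2)+\delta\,UN(L_1\cup L_2)$ if $L_1\cap L_2\neq\emptyset$. With risk-neutral players this defines a game $\Gamma_{\mathcal{SA}_\delta}(A)$ with expected-utility payoffs; an equilibrium outcome is the vector of expected utilities. *)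

From HB Require Import structures.
From mathcomp Require Import all_boot all_order all_algebra.
Set Implicit Arguments. Unset Strict Implicit. Unset Printing Implicit Defensive.
Import Order.TTheory GRing.Theory Num.Theory.
Local Open Scope ring_scope.

Definition avg (R : fieldType) (T : finType) (S : {set T}) (f : T -> R) : R :=
  (\sum_(t in S) f t) / #|S|%:R.

(* Expected utility of f under the mechanism SA_delta given the submitted
   lists L1, L2 (subsets of the index set T). *)
Definition SA_payoff (R : fieldType) (T : finType) (delta : R)
  (L1 L2 : {set T}) (f : T -> R) : R :=
  if (L1 == set0) && (L2 == set0) then avg [set: T] f
  else if L1 :&: L2 == set0 then avg (L1 :|: L2) f
  else (1 - delta) * avg (L1 :&: L2) f + delta * avg (L1 :|: L2) f.

(* Pure Nash equilibrium of the game Gamma_{SA_delta}(A), where the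
   alternatives are indexed by T and a1, a2 are the players' utilities. *)
Definition SA_pure_NE (R : realFieldType) (T : finType) (delta : R)
  (a1 a2 : T -> R) (L1 L2 : {set T}) : Prop :=
  (forall L1' : {set T}, SA_payoff delta L1' L2 a1 <= SA_payoff delta L1 L2 a1) /\
  (forall L2' : {set T}, SA_payoff delta L1 L2' a2 <= SA_payoff delta L1 L2 a2).

(* Index set of A(k): pairs (c,d) of naturals with c + d <= k. *)
Definition Aidx (k : nat) : finType :=
  {p : 'I_k.+1 * 'I_k.+1 | (p.1 + p.2 <= k)%N}.

Definition Ak1 (R : fieldType) (k : nat) (p : Aidx k) : R :=
  ((val p).1 : nat)%:R / k%:R.
Definition Ak2 (R : fieldType) (k : nat) (p : Aidx k) : R :=
  ((val p).2 : nat)%:R / k%:R.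

Definition dist2 (R : rcfType) (p q : R * R) : R :=
  Num.sqrt ((p.1 - q.1) ^+ 2 + (p.2 - q.2) ^+ 2).

Definition close_to_segment (R : rcfType) (eps : R) (u v p : R * R) : Prop :=
  exists t : R, 0 <= t <= 1 /\
    dist2 p (t * u.1 + (1 - t) * v.1, t * u.2 + (1 - t) * v.2) <= eps.

From HB Require Import structures.
From mathcomp Require Import all_boot all_order all_algebra.
From mathcomp Require Import zify.
From mathcomp.algebra_tactics Require Import ring lra.
Import Order.TTheory GRing.Theory Num.Theory.
Local Open Scope ring_scope.
Set Implicit Arguments. Unset Strict Implicit.

(* At a pure equilibrium the two lists are either disjoint, and the outcome is the
   mean of the alternatives in their union U, or they meet, and the outcome mixes
   the mean over the intersection (weight 1 - delta) with the mean over U (weight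
   delta).  In both cases one-alternative deviations show that the first mean m is
   not strictly Pareto-dominated by any alternative of A(k), which puts m within 1/k
   of the frontier c + d = 1, and that U is stable: no alternative outside U beats
   its mean in a coordinate, and every member of U reaches it in some coordinate.
   Stability keeps both coordinates of the mean of U, hence of m, above x - 1/(2k):
   below a threshold b < x the surplus of A(k) above b in the first coordinate
   exceeds the shortfall below b of the alternatives reaching b in the second; in
   the continuum limit their difference is (1 - 3b + 3b^3)/6, whose root in
   [0, 1/2] is x.  So m lies within 1/k of the segment, and the mixing moves the
   outcome by at most delta. *)

Section Averages.
Variables (R : realFieldType) (T : finType).
Implicit Types (S : {set T}) (f g : T -> R).

Lemma avg_mulr S f : S != set0 -> avg S f * #|S|%:R = \sum_(t in S) f t.
Proof. by move=> S0; rewrite /avg divfK // pnatr_eq0 -lt0n card_gt0. Qed.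

Lemma avg_set1 f j : avg [set j] f = f j.
Proof. by rewrite /avg big_set1 cards1 divr1. Qed.

Lemma avgD S f g : avg S (fun t => f t + g t) = avg S f + avg S g.
Proof. by rewrite /avg big_split mulrDl. Qed.

Lemma avg_ge0 S f : (forall j, j \in S -> 0 <= f j) -> 0 <= avg S f.
Proof. by move=> f0; rewrite /avg divr_ge0 ?sumr_ge0. Qed.

Lemma avg_le S f M : 0 <= M -> (forall j, j \in S -> f j <= M) -> avg S f <= M.
Proof.
move=> M0 fM; have [->|S0] := eqVneq S set0; first by rewrite /avg big_set0 mul0r.
rewrite /avg ler_pdivrMr ?ltr0n ?card_gt0 //.
have -> : M * #|S|%:R = \sum_(t in S) M by rewrite sumr_const mulr_natr.
exact: ler_sum.
Qed.

Lemma sum_sub_avg S f : \sum_(t in S) (f t - avg S f) = 0.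
Proof.
have [->|S0] := eqVneq S set0; first by rewrite big_set0.
by rewrite sumrB sumr_const -avg_mulr // mulr_natr subrr.
Qed.

Lemma eq_avg_of_le S f : (forall j, j \in S -> f j <= avg S f) ->
  forall j, j \in S -> f j = avg S f.
Proof.
move=> le_avg j jS; apply/eqP; rewrite eq_le le_avg //= -subr_le0.
have : \sum_(t in S) (avg S f - f t) = 0.
  rewrite (eq_bigr (fun t => - (f t - avg S f))) => [|t _]; last by rewrite opprB.
  by rewrite sumrN sum_sub_avg oppr0.
move=> sum0; rewrite (psumr_eq0P _ sum0 jS) // => t tS.
by rewrite subr_ge0 le_avg.
Qed.

Lemma avg_setU1 S f j : j \notin S -> S != set0 ->
  avg (j |: S) f * (#|S|%:R + 1) = avg S f * #|S|%:R + f j.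
Proof.
move=> jS S0; have jS0 : j |: S != set0 by apply/set0Pn; exists j; rewrite setU11.
have cardU : #|j |: S| = #|S|.+1 by rewrite cardsU1 jS.
by rewrite natr1 -cardU avg_mulr // avg_mulr // big_setU1 //= addrC.
Qed.

Lemma le_avg_of_avg_setU1_le S f j : j \notin S -> S != set0 ->
  avg (j |: S) f <= avg S f -> f j <= avg S f.
Proof.
move=> jS S0 le_avg; have := avg_setU1 f jS S0.
have : 0 < #|S|%:R :> R by rewrite ltr0n card_gt0.
nra.
Qed.

Lemma avg_setU1_le_of_avg_le S f j : j \notin S -> S != set0 ->
  avg S f <= avg (j |: S) f -> avg (j |: S) f <= f j.
Proof.
move=> jS S0 le_avg; have := avg_setU1 f jS S0.
have : 0 < #|S|%:R :> R by rewrite ltr0n card_gt0.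
nra.
Qed.

Definition avg_stable f g (U : {set T}) : Prop :=
  (forall j, j \notin U -> f j <= avg U f /\ g j <= avg U g) /\
  (forall j, j \in U -> avg U f <= f j \/ avg U g <= g j).

End Averages.

Section Payoff.
Variables (R : realFieldType) (T : finType) (d : R).
Implicit Types (f g : T -> R).
Variables L1 L2 : {set T}.

Lemma SA_payoffC f : SA_payoff d L1 L2 f = SA_payoff d L2 L1 f.
Proof. by rewrite /SA_payoff setIC setUC andbC. Qed.

Lemma SA_payoff_disjoint f : L1 :&: L2 = set0 -> L1 :|: L2 != set0 ->
  SA_payoff d L1 L2 f = avg (L1 :|: L2) f.
Proof.
move=> I0 U0; rewrite /SA_payoff I0 eqxx; case: ifP => // /andP[/eqP L10 /eqP L20].
by move: U0; rewrite L10 L20 setU0 eqxx.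
Qed.

Lemma SA_payoff_meet f : L1 :&: L2 != set0 ->
  SA_payoff d L1 L2 f = (1 - d) * avg (L1 :&: L2) f + d * avg (L1 :|: L2) f.
Proof.
move=> I0; rewrite /SA_payoff (negbTE I0); case: ifP => // /andP[/eqP L10 _].
by move: I0; rewrite L10 set0I eqxx.
Qed.

Lemma SA_payoffD f g :
  SA_payoff d L1 L2 (fun t => f t + g t) = SA_payoff d L1 L2 f + SA_payoff d L1 L2 g.
Proof. by rewrite /SA_payoff !avgD; case: ifP => _; last case: ifP => _; ring. Qed.

Lemma SA_payoff_ge0 f : 0 <= d <= 1 -> (forall j, 0 <= f j) -> 0 <= SA_payoff d L1 L2 f.
Proof.
move=> /andP[d0 d1] f0; have avg0 S : 0 <= avg S f by apply: avg_ge0.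
rewrite /SA_payoff; case: ifP => _ //; case: ifP => _ //.
by apply: addr_ge0; apply: mulr_ge0; rewrite ?avg0 ?subr_ge0.
Qed.

Lemma SA_payoff_le f M : 0 <= d <= 1 -> 0 <= M -> (forall j, f j <= M) ->
  SA_payoff d L1 L2 f <= M.
Proof.
move=> /andP[d0 d1] M0 fM; have avgM S : avg S f <= M by apply: avg_le.
rewrite /SA_payoff; case: ifP => _ //; case: ifP => _ //.
have := avgM (L1 :&: L2); have := avgM (L1 :|: L2); nra.
Qed.

End Payoff.

Section BestResponse.
Variables (R : realFieldType) (T : finType) (d : R) (f : T -> R) (L1 L2 : {set T}).
Hypotheses (d_gt0 : 0 < d) (d_lt1 : d < 1).
Hypothesis best : forall L1', SA_payoff d L1' L2 f <= SA_payoff d L1 L2 f.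

Lemma set1_neq0 (j : T) : [set j] != set0.
Proof. by apply/set0Pn; exists j; rewrite set11. Qed.

Lemma br_empty : L1 = set0 -> L2 = set0 -> forall j, f j = avg [set: T] f.
Proof.
move=> L10 L20 j; rewrite (eq_avg_of_le _ (in_setT j)) // => i _.
have := best [set i]; rewrite SA_payoff_disjoint ?L20 ?setI0 ?setU0 ?set1_neq0 // avg_set1.
by rewrite /SA_payoff L10 eqxx.
Qed.

Section Disjoint.
Hypotheses (I0 : L1 :&: L2 = set0) (U0 : L1 :|: L2 != set0).

Lemma disjoint_notin y : y \in L1 -> y \notin L2.
Proof. by move=> y1; apply/negP => y2; move/setP: I0 => /(_ y); rewrite !inE y1 y2. Qed.

Lemma br_disjoint_other j : j \in L2 -> f j <= avg (L1 :|: L2) f.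
Proof.
move=> j2.
have meet : (j |: L1) :&: L2 = [set j].
  apply/setP => y; rewrite !inE; have [->|_] := eqVneq y j; first by rewrite j2.
  by case: (boolP (y \in L1)) => // /disjoint_notin /negbTE ->.
have join : (j |: L1) :|: L2 = L1 :|: L2.
  by apply/setP => y; rewrite !inE; have [->|] := eqVneq y j; rewrite ?j2 ?orbT.
have := best (j |: L1).
rewrite (SA_payoff_disjoint _ _ I0 U0) SA_payoff_meet meet ?set1_neq0 // join avg_set1.
have := d_lt1; nra.
Qed.

Lemma br_disjoint_outside j : j \notin L1 :|: L2 -> f j <= avg (L1 :|: L2) f.
Proof.
move=> jU; have j2 : j \notin L2 by move: jU; rewrite inE negb_or => /andP[].
have meet : (j |: L1) :&: L2 = set0.
  apply/setP => y; rewrite !inE; have [->|_] := eqVneq y j; first by rewrite (negbTE j2).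
  by case: (boolP (y \in L1)) => // /disjoint_notin /negbTE ->.
have U'0 : (j |: L1) :|: L2 != set0 by apply/set0Pn; exists j; rewrite !inE eqxx.
have := best (j |: L1).
rewrite (SA_payoff_disjoint _ _ I0 U0) (SA_payoff_disjoint _ _ meet U'0) -setUA.
exact: le_avg_of_avg_setU1_le.
Qed.

Lemma br_disjoint_own j : j \in L1 -> avg (L1 :|: L2) f <= f j.
Proof.
move=> j1; have jU : j \in L1 :|: L2 by rewrite inE j1.
have [U1|Uj0] := eqVneq ((L1 :|: L2) :\ j) set0.
  suff -> : L1 :|: L2 = [set j] by rewrite avg_set1.
  by apply/eqP; rewrite eqEsubset sub1set jU andbT -setD_eq0 U1.
have meet : (L1 :\ j) :&: L2 = set0 by rewrite setIDAC I0 set0D.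
have join : (L1 :\ j) :|: L2 = (L1 :|: L2) :\ j.
  apply/setP => y; rewrite !inE; have [->|] //= := eqVneq y j.
  exact/negbTE/disjoint_notin.
have U'0 : (L1 :\ j) :|: L2 != set0 by rewrite join.
have := best (L1 :\ j).
rewrite (SA_payoff_disjoint _ _ I0 U0) (SA_payoff_disjoint _ _ meet U'0) join => le_avg.
by rewrite -(setD1K jU); apply: avg_setU1_le_of_avg_le; rewrite ?setD1K ?setD11.
Qed.

End Disjoint.

Section Meet.
Hypothesis I0 : L1 :&: L2 != set0.

Lemma meet_union_neq0 : L1 :|: L2 != set0.
Proof.
case/set0Pn: I0 => y; rewrite inE => /andP[y1 _].
by apply/set0Pn; exists y; rewrite inE y1.
Qed.

Lemma br_meet_other j : j \in L2 -> f j <= avg (L1 :&: L2) f.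
Proof.
move=> j2.
have meet : (j |: (L1 :\: L2)) :&: L2 = [set j].
  apply/setP => y; rewrite !inE; have [->|] //= := eqVneq y j.
  by case: (y \in L2); rewrite ?andbF.
have join : (j |: (L1 :\: L2)) :|: L2 = L1 :|: L2.
  apply/setP => y; rewrite !inE; have [->|] //= := eqVneq y j; first by rewrite j2 orbT.
  by case: (y \in L2); rewrite ?orbT ?orbF.
have := best (j |: (L1 :\: L2)).
rewrite !SA_payoff_meet ?meet ?set1_neq0 // join avg_set1.
have := d_lt1; nra.
Qed.

Lemma br_meet_union : avg (L1 :|: L2) f <= avg (L1 :&: L2) f.
Proof.
have meet : (L1 :\: L2) :&: L2 = set0.
  by apply/setP => y; rewrite !inE; case: (y \in L2); rewrite ?andbF.
have join : (L1 :\: L2) :|: L2 = L1 :|: L2.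
  by apply/setP => y; rewrite !inE; case: (y \in L2); rewrite ?orbT ?orbF.
have := best (L1 :\: L2); rewrite SA_payoff_disjoint ?join ?meet_union_neq0 // SA_payoff_meet //.
have := d_lt1; nra.
Qed.

Lemma br_meet_outside j : j \notin L1 :|: L2 -> f j <= avg (L1 :|: L2) f.
Proof.
move=> jU; have j2 : j \notin L2 by move: jU; rewrite inE negb_or => /andP[].
have meet : (j |: L1) :&: L2 = L1 :&: L2.
  by apply/setP => y; rewrite !inE; have [->|] //= := eqVneq y j; rewrite (negbTE j2) andbF.
have := best (j |: L1); rewrite !SA_payoff_meet ?meet // -setUA => le_pay.
by apply: le_avg_of_avg_setU1_le; rewrite ?meet_union_neq0 //; have := d_gt0; nra.
Qed.

Lemma br_meet_own j : j \in L1 -> j \notin L2 -> avg (L1 :|: L2) f <= f j.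
Proof.
move=> j1 j2; have jU : j \in L1 :|: L2 by rewrite inE j1.
have meet : (L1 :\ j) :&: L2 = L1 :&: L2.
  by apply/setP => y; rewrite !inE; have [->|] //= := eqVneq y j; rewrite (negbTE j2) andbF.
have join : (L1 :\ j) :|: L2 = (L1 :|: L2) :\ j.
  by apply/setP => y; rewrite !inE; have [->|] //= := eqVneq y j; rewrite (negbTE j2).
have Uj0 : (L1 :|: L2) :\ j != set0.
  case/set0Pn: I0 => y; rewrite inE => /andP[y1 y2]; apply/set0Pn; exists y.
  by rewrite !inE y1 andbT; apply: contraNneq j2 => <-.
have := best (L1 :\ j); rewrite !SA_payoff_meet ?meet // join => le_pay.
rewrite -(setD1K jU); apply: avg_setU1_le_of_avg_le; rewrite ?setD1K ?setD11 //.
by have := d_gt0; nra.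
Qed.

End Meet.
End BestResponse.

Section Equilibrium.
Variables (R : realFieldType) (T : finType) (d : R) (f1 f2 : T -> R) (L1 L2 : {set T}).
Hypotheses (d_gt0 : 0 < d) (d_lt1 : d < 1).
Hypothesis NE : SA_pure_NE d f1 f2 L1 L2.
Local Notation U := (L1 :|: L2).
Local Notation I := (L1 :&: L2).

Let best1 : forall L1', SA_payoff d L1' L2 f1 <= SA_payoff d L1 L2 f1.
Proof. by case: NE. Qed.

Let best2 : forall L2', SA_payoff d L2' L1 f2 <= SA_payoff d L2 L1 f2.
Proof. by case: NE => _ best L2'; rewrite !(SA_payoffC d _ L1). Qed.

Lemma SA_NE_disjoint : I = set0 -> U != set0 ->
  avg_stable f1 f2 U /\ forall j, f1 j <= avg U f1 \/ f2 j <= avg U f2.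
Proof.
move=> I0 U0; have I0' : L2 :&: L1 = set0 by rewrite setIC.
have U0' : L2 :|: L1 != set0 by rewrite setUC.
have other1 := br_disjoint_other d_lt1 best1 I0 U0.
have other2 := br_disjoint_other d_lt1 best2 I0' U0'.
have own1 := br_disjoint_own best1 I0 U0.
have own2 := br_disjoint_own best2 I0' U0'.
have outside1 := br_disjoint_outside best1 I0 U0.
have outside2 := br_disjoint_outside best2 I0' U0'.
rewrite [L2 :|: L1]setUC in other2 own2 outside2.
split; first split.
- by move=> j jU; split; [exact: outside1|exact: outside2].
- by move=> j; rewrite inE => /orP[/own1|/own2]; [left|right].
move=> j; case: (boolP (j \in L1)) => [/other2|j1]; first by right.
case: (boolP (j \in L2)) => [/other1|j2]; first by left.
by left; apply: outside1; rewrite inE negb_or j1.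
Qed.

Lemma SA_NE_meet : I != set0 ->
  [/\ avg_stable f1 f2 U, avg U f1 <= avg I f1, avg U f2 <= avg I f2
    & forall j, f1 j <= avg I f1 \/ f2 j <= avg I f2].
Proof.
move=> I0; have I0' : L2 :&: L1 != set0 by rewrite setIC.
have other1 := br_meet_other d_lt1 best1 I0.
have other2 := br_meet_other d_lt1 best2 I0'.
have union1 := br_meet_union d_lt1 best1 I0.
have union2 := br_meet_union d_lt1 best2 I0'.
have outside1 := br_meet_outside d_gt0 best1 I0.
have outside2 := br_meet_outside d_gt0 best2 I0'.
have own1 := br_meet_own d_gt0 best1 I0.
have own2 := br_meet_own d_gt0 best2 I0'.
rewrite [L2 :|: L1]setUC [L2 :&: L1]setIC in other2 union2 outside2 own2.
have const1 : forall j, j \in I -> f1 j = avg I f1.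
  by apply: eq_avg_of_le => j; rewrite inE => /andP[_ /other1].
split => //.
- split; first by move=> j jU; split; [exact: outside1|exact: outside2].
  move=> j; rewrite inE; case: (boolP (j \in L1)) => j1; case: (boolP (j \in L2)) => j2 //= _.
  + by left; rewrite const1 ?inE ?j1.
  + by left; apply: own1.
  + by right; apply: own2.
move=> j; case: (boolP (j \in L2)) => [/other1|j2]; first by left.
case: (boolP (j \in L1)) => [/other2|j1]; first by right.
by left; apply: le_trans union1; apply: outside1; rewrite inE negb_or j1.
Qed.

Lemma SA_NE_decomposition : U != set0 ->
  exists (S : {set T}) (lam : R), [/\ 0 <= lam <= d,
    forall f, SA_payoff d L1 L2 f = (1 - lam) * avg S f + lam * avg U f,
    avg_stable f1 f2 U,
    avg U f1 <= avg S f1 /\ avg U f2 <= avg S f2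
    & forall j, f1 j <= avg S f1 \/ f2 j <= avg S f2].
Proof.
move=> U0; have [I0|I0] := eqVneq I set0.
  have [stable undom] := SA_NE_disjoint I0 U0.
  exists U, 0; split => //; first by rewrite lexx ltW.
  by move=> f; rewrite SA_payoff_disjoint // subr0 mul1r mul0r addr0.
have [stable le1 le2 undom] := SA_NE_meet I0.
by exists I, d; split => //; [rewrite ltW ?lexx | move=> f; apply: SA_payoff_meet].
Qed.

End Equilibrium.

Section SurplusDeficit.
Variables (R : realFieldType) (T : finType).
Implicit Types (f g : T -> R) (b : R).

Definition surplus f b : R := \sum_j (if b <= f j then f j - b else 0).

Definition deficit f g b : R :=
  \sum_j (if (f j < b) && (b <= g j) then b - f j else 0).

(* On U the values of f above its mean balance those below it; the members of U
   below the mean in f reach it in g, so they are counted by the deficit, and the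
   alternatives outside U add no surplus. *)
Lemma surplus_le_deficit f g (U : {set T}) :
  (forall j, j \notin U -> f j <= avg U f) ->
  (forall j, j \in U -> avg U f <= f j \/ avg U f <= g j) ->
  surplus f (avg U f) <= deficit f g (avg U f).
Proof.
move=> out_le in_ge; set b := avg U f.
rewrite -subr_le0 -sumrB.
apply: le_trans (_ : _ <= \sum_(j in U) (f j - b)) _; last by rewrite sum_sub_avg.
rewrite [X in _ <= X]big_mkcond /=; apply: ler_sum => j _; case: (boolP (j \in U)) => jU.
  case: lerP => [bf|fb]; first by rewrite /= subr0.
  case: (in_ge j jU) => [bf|bg]; first by move: fb; rewrite ltNge bf.
  by rewrite /= bg sub0r opprB.
have := out_le j jU; rewrite -/b => fb.
case: lerP => [bf|_] /=; first by rewrite subr0 subr_le0.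
by case: ifP => _; rewrite sub0r ?oppr0 // oppr_le0 subr_ge0.
Qed.

Lemma avg_lower_bound f g (U : {set T}) beta :
  (forall b, 0 <= b -> b < beta -> deficit f g b < surplus f b) ->
  (forall j, 0 <= f j) ->
  (forall j, j \notin U -> f j <= avg U f) ->
  (forall j, j \in U -> avg U f <= f j \/ avg U f <= g j) ->
  beta <= avg U f.
Proof.
move=> gap f0 out_le in_ge; rewrite leNgt; apply/negP => lt_beta.
have := gap _ (avg_ge0 (fun j _ => f0 j)) lt_beta.
by rewrite ltNge surplus_le_deficit.
Qed.

End SurplusDeficit.

Lemma ex_threshold (P : pred nat) (k : nat) :
  P k -> (forall m n, (m <= n)%N -> P m -> P n) ->
  exists2 j, (j <= k)%N & forall n, P n = (j <= n)%N.
Proof.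
move=> Pk P_up; have exP : exists n, P n by exists k.
case: (ex_minnP exP) => j Pj j_min; exists j; first exact: j_min.
by move=> n; apply/idP/idP => [/j_min //|jn]; apply: P_up jn Pj.
Qed.

Lemma big_ord_range (V : nmodType) (n a b : nat) (F : nat -> V) : (b <= n)%N ->
  \sum_(i < n | (a <= i < b)%N) F i = \sum_(a <= i < b) F i.
Proof.
move=> bn; rewrite -(big_mkord (fun i => a <= i < b)%N).
by rewrite (big_nat_widenl a 0) // (big_nat_widen 0 b n).
Qed.

Section Grid.
Variable k : nat.

Lemma sum_Aidx (V : nmodType) (F : 'I_k.+1 * 'I_k.+1 -> V) :
  \sum_(p : Aidx k) F (val p) = \sum_(q : 'I_k.+1 * 'I_k.+1 | (q.1 + q.2 <= k)%N) F q.
Proof.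
rewrite (reindex_omap (val : Aidx k -> _) insub); last by move=> q qk; rewrite insubT.
apply: eq_bigl => -[q qk] /=.
by rewrite insubT /= qk; apply/esym/eqP; congr Some; apply: val_inj.
Qed.

Lemma sum_Aidx_range (V : nmodType) (lo hi j : nat) (g : nat -> V) : (hi <= k.+1)%N ->
  \sum_(p : Aidx k) (if (lo <= (val p).1 < hi)%N && (j <= (val p).2)%N then g (val p).1 else 0)
  = \sum_(lo <= c < hi) g c *+ (k.+1 - c - j).
Proof.
move=> hik.
rewrite (sum_Aidx (fun q => if (lo <= q.1 < hi)%N && (j <= q.2)%N then g q.1 else 0)).
rewrite -(pair_big_dep xpredT (fun c d : 'I_k.+1 => (c + d <= k)%N)
  (fun c d : 'I_k.+1 => if (lo <= c < hi)%N && (j <= d)%N then g c else 0)) /=.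
rewrite -(big_ord_range (n := k.+1)) // [RHS]big_mkcond; apply: eq_bigr => c _ /=.
case: ifP => /= c_range; last by rewrite big1 // => d _; rewrite andFb.
have ck : (c <= k)%N by rewrite -ltnS.
rewrite -big_mkcondr /= -sumr_const_nat -(big_ord_range (n := k.+1)) ?leq_subr //.
by apply: eq_bigl => d; rewrite andbC ltn_subRL addnC ltnS.
Qed.

End Grid.

Section Cubic.
Variable R : realFieldType.

(* [6 k (surplus - deficit)] on A(k) at the threshold [b = t / k], where [J] is
   the ceiling of [t]; its continuum limit is [k^3 (1 - 3 b + 3 b^3)]. *)
Definition gap_poly (K J t : R) : R :=
  K ^+ 3 - 3 * K ^+ 2 * t + 3 * K ^+ 2 + 2 * K - 9 * K * t - 6 * t
    + 3 * J ^+ 2 * (2 * t - J + 1).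

Lemma root_le_two_fifths (x : R) :
  0 <= x <= 2^-1 -> x ^+ 3 - x + 3^-1 = 0 -> x <= 2 / 5.
Proof.
move=> /andP[x0 x1] root; rewrite leNgt; apply/negP => x_gt.
have : 0 < (x - 2 / 5) * (1 - (x ^+ 2 + x * (2 / 5) + 4 / 25)) by apply: mulr_gt0; nra.
nra.
Qed.

Lemma cube_le_shift (t J : R) : 0 <= t -> J - 1 < t -> t <= J ->
  t ^+ 3 + t ^+ 2 <= J ^+ 2 * (2 * t - J + 1).
Proof.
move=> t0 Jt tJ; rewrite -subr_ge0.
have -> : J ^+ 2 * (2 * t - J + 1) - (t ^+ 3 + t ^+ 2) =
    (J - t) * (t ^+ 2 + t * (2 - (J - t)) + (J - t) * (1 - (J - t))) by ring.
apply: mulr_ge0; first lra.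
by apply: addr_ge0; [apply: addr_ge0|]; [nra | apply: mulr_ge0; lra | apply: mulr_ge0; lra].
Qed.

(* Scaling the root [x] by [K] makes the cubic vanish at [K x]; the gap
   [K x - t > 1/2] then bounds the cubic at [t] from below. *)
Lemma cubic_at_shift (x K t : R) : 0 <= x -> x ^+ 3 - x + 3^-1 = 0 -> x <= 2 / 5 ->
  1 <= K -> 0 <= t -> t < K * x - 2^-1 ->
  39 / 50 * K ^+ 2 <= K ^+ 3 - 3 * K ^+ 2 * t + 3 * t ^+ 3.
Proof.
move=> x0 root x25 K1 t0 tx.
have -> : K ^+ 3 - 3 * K ^+ 2 * t + 3 * t ^+ 3 =
    (K * x - t) * (3 * K ^+ 2 - 3 * ((K * x) ^+ 2 + (K * x) * t + t ^+ 2)).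
  have root3 : 3 * K ^+ 3 * (x ^+ 3 - x + 3^-1) = 0 by rewrite root mulr0.
  by rewrite -[LHS]subr0 -[X in _ - X]root3; field.
have le_Kx : t <= K * x by lra.
have : (K * x - t) * (3 * K ^+ 2 * (1 - 3 * x ^+ 2)) <=
    (K * x - t) * (3 * K ^+ 2 - 3 * ((K * x) ^+ 2 + (K * x) * t + t ^+ 2)).
  apply: ler_wpM2l; first lra.
  have : t ^+ 2 <= (K * x) ^+ 2 by rewrite !expr2; apply: ler_pM; lra.
  have : (K * x) * t <= (K * x) ^+ 2 by rewrite expr2; apply: ler_wpM2l; nra.
  have -> : (K * x) ^+ 2 = K ^+ 2 * x ^+ 2 by ring.
  lra.
apply: le_trans.
have -> : 39 / 50 * K ^+ 2 = 2^-1 * (3 * K ^+ 2 * (1 - 3 * (2 / 5) ^+ 2)) :> R by field.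
apply: ler_pM; [lra | | lra | ].
- by apply: mulr_ge0; rewrite ?subr_ge0; nra.
- apply: ler_wpM2l; first nra.
  by rewrite lerD2l lerN2; apply: ler_wpM2l => //; nra.
Qed.

Lemma cubic_gap_pos (x K J t : R) : 0 <= x <= 2^-1 -> x ^+ 3 - x + 3^-1 = 0 ->
  1 <= K -> 0 <= t -> J - 1 < t -> t <= J -> t < K * x - 2^-1 ->
  0 < gap_poly K J t.
Proof.
rewrite /gap_poly => x01 root K1 t0 Jt tJ tx; have x25 := root_le_two_fifths x01 root.
case/andP: x01 => x0 _.
have := cube_le_shift t0 Jt tJ; have := cubic_at_shift x0 root x25 K1 t0 tx.
have t25 : t <= 2 / 5 * K by nra.
have : 0 <= (2 / 5 * K - t) * (13 / 5 * K - t) by apply: mulr_ge0; lra.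
have : K <= K ^+ 2 by rewrite expr2 ler_pMr; lra.
nra.
Qed.

End Cubic.

Definition in_simplex (R : numDomainType) (p1 p2 : R) : Prop :=
  [/\ 0 <= p1, 0 <= p2 & p1 + p2 <= 1].

Section Segment.
Variable R : rcfType.

Lemma dist2_le (p q : R * R) (e1 e2 : R) :
  `|p.1 - q.1| <= e1 -> `|p.2 - q.2| <= e2 -> dist2 p q <= e1 + e2.
Proof.
rewrite !ler_norml => /andP[a1 a2] /andP[b1 b2].
have e0 : 0 <= e1 + e2 by lra.
rewrite /dist2 -(ger0_norm e0) -sqrtr_sqr ler_wsqrtr //; nra.
Qed.

Lemma close_to_segment_at (x eps z : R) (p : R * R) : x < 2^-1 -> x <= z <= 1 - x ->
  `|p.1 - z| + `|p.2 - (1 - z)| <= eps -> close_to_segment eps (x, 1 - x) (1 - x, x) p.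
Proof.
move=> x_lt /andP[xz zx] near; have x2 : 0 < 1 - 2 * x by lra.
pose t := (1 - x - z) / (1 - 2 * x).
have t1 : t * x + (1 - t) * (1 - x) = z by rewrite /t; field; lra.
have t2 : t * (1 - x) + (1 - t) * x = 1 - z by rewrite /t; field; lra.
exists t; split; last by apply: le_trans near; apply: dist2_le; rewrite /= ?t1 ?t2.
apply/andP; split; first by apply: divr_ge0; lra.
by rewrite ler_pdivrMr // mul1r; lra.
Qed.

Lemma close_to_segment_mix (x h lam eps m1 m2 w1 w2 : R) :
  0 <= x < 2^-1 -> 0 <= h -> 0 <= lam <= 1 -> lam + h <= eps ->
  x - h / 2 <= m1 -> x - h / 2 <= m2 -> 1 - h <= m1 + m2 <= 1 ->
  in_simplex w1 w2 ->
  close_to_segment eps (x, 1 - x) (1 - x, x)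
    ((1 - lam) * m1 + lam * w1, (1 - lam) * m2 + lam * w2).
Proof.
move=> /andP[x0 x_lt] h0 /andP[l0 l1] eps_ge m1x m2x /andP[mlo mhi] [w10 w20 w_le].
have [z [xz zx zm1 zm2]] : exists z, [/\ x <= z, z <= 1 - x,
    `|m1 - z| <= h / 2 & `|m2 - (1 - z)| <= h / 2].
  have [lo|lo] := ltrP ((m1 - m2 + 1) / 2) x.
    by exists x; rewrite !ler_norml; split => //; try (apply/andP; split); lra.
  have [hi|hi] := ltrP (1 - x) ((m1 - m2 + 1) / 2).
    by exists (1 - x); rewrite !ler_norml; split => //; try (apply/andP; split); lra.
  by exists ((m1 - m2 + 1) / 2); rewrite !ler_norml; split => //; try (apply/andP; split); lra.
apply: (close_to_segment_at (z := (1 - lam) * z + lam / 2)) => //=.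
  by apply/andP; split; nra.
move: zm1 zm2; rewrite !ler_norml => /andP[? ?] /andP[? ?].
apply: le_trans (_ : ((1 - lam) * (h / 2) + lam / 2) + ((1 - lam) * (h / 2) + lam / 2) <= _).
  by apply: lerD; rewrite ler_norml; apply/andP; split; nra.
nra.
Qed.

Lemma close_to_segment_simplex (x eps p1 p2 : R) : 0 <= x < 2^-1 -> 1 <= eps ->
  in_simplex p1 p2 -> close_to_segment eps (x, 1 - x) (1 - x, x) (p1, p2).
Proof.
move=> /andP[x0 x_lt] eps1 [p10 p20 p_le].
apply: (close_to_segment_at (z := 2^-1)) => //=; first by apply/andP; split; lra.
have : `|p1 - 2^-1| <= 2^-1 by rewrite ler_norml; apply/andP; split; lra.
have : `|p2 - (1 - 2^-1)| <= 2^-1 by rewrite ler_norml; apply/andP; split; lra.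
lra.
Qed.

End Segment.

Section Ak.
Variables (R : realFieldType) (k : nat).
Hypothesis k_gt0 : (0 < k)%N.
Local Notation A1 := (@Ak1 R k).
Local Notation A2 := (@Ak2 R k).

Lemma Ak1_ge0 p : 0 <= A1 p.
Proof. exact: divr_ge0. Qed.

Lemma Ak2_ge0 p : 0 <= A2 p.
Proof. exact: divr_ge0. Qed.

Lemma Ak_sum_le1 p : A1 p + A2 p <= 1.
Proof.
rewrite /Ak1 /Ak2 -mulrDl -natrD ler_pdivrMr ?ltr0n // mul1r ler_nat.
exact: (valP p).
Qed.

Lemma Aidx_swap_subproof (p : Aidx k) : ((val p).2 + (val p).1 <= k)%N.
Proof. by rewrite addnC; exact: valP p. Qed.

Lemma sum_Ak_swap (V : nmodType) (F : R -> R -> V) :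
  \sum_(p : Aidx k) F (A1 p) (A2 p) = \sum_(p : Aidx k) F (A2 p) (A1 p).
Proof.
pose swap (p : Aidx k) : Aidx k := exist _ ((val p).2, (val p).1) (Aidx_swap_subproof p).
have swapK : involutive swap by move=> p; apply: val_inj; case: p => -[].
by rewrite (reindex_inj (inv_inj swapK)).
Qed.

Lemma Ak_threshold (b : R) : b <= 1 ->
  exists2 j, (j <= k)%N & forall n, (b <= n%:R / k%:R) = (j <= n)%N.
Proof.
move=> b1; apply: ex_threshold => [|m n mn]; first by rewrite divff ?pnatr_eq0 -?lt0n.
by move/le_trans; apply; rewrite ler_pM2r ?invr_gt0 ?ltr0n // ler_nat.
Qed.

Lemma surplus_Ak b (j : nat) : (forall n, (b <= n%:R / k%:R) = (j <= n)%N) ->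
  surplus A1 b = \sum_(j <= c < k.+1) (c%:R / k%:R - b) *+ (k.+1 - c).
Proof.
move=> thr; under eq_bigr do rewrite -[(k.+1 - _)%N]subn0.
rewrite /surplus -sum_Aidx_range //; apply: eq_bigr => p _.
by rewrite /Ak1 thr (ltn_ord (val p).1) leq0n !andbT.
Qed.

Lemma deficit_Ak b (j : nat) : (forall n, (b <= n%:R / k%:R) = (j <= n)%N) ->
  (j <= k.+1)%N ->
  deficit A1 A2 b = \sum_(0 <= c < j) (b - c%:R / k%:R) *+ (k.+1 - c - j).
Proof.
move=> thr jk; rewrite /deficit -sum_Aidx_range //; apply: eq_bigr => p _.
by rewrite /Ak1 /Ak2 ltNge !thr -ltnNge.
Qed.

Lemma surplus_sub_deficit_Ak b (j : nat) :
  (forall n, (b <= n%:R / k%:R) = (j <= n)%N) -> (j + j <= k)%N ->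
  (surplus A1 b - deficit A1 A2 b) * (6 * k%:R) = gap_poly k%:R j%:R (b * k%:R).
Proof.
move=> thr jk; have k0 : k%:R != 0 :> R by rewrite pnatr_eq0 -lt0n.
have jk1 : (j <= k.+1)%N by lia.
pose F (n : nat) : R := let n := n%:R in let K := k%:R in let t := b * K in
  (- (n * (n - 1) * (2 * n - 1)) / 6 + (K + 1 + t) * (n * (n - 1)) / 2
   - (K + 1) * t * n) / K.
pose H (n : nat) : R := let n := n%:R in let K := k%:R in let t := b * K in
  let J := j%:R in
  (n * (n - 1) * (2 * n - 1) / 6 - (K + 1 - J + t) * (n * (n - 1)) / 2
   + (K + 1 - J) * t * n) / K.
rewrite (surplus_Ak thr) (deficit_Ak thr jk1).
rewrite (telescope_sumr_eq F _ jk1) => [|c /andP[_ ck]]; last first.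
  by rewrite -(mulr_natr _ (k.+1 - c)) natrB ?(ltnW ck) // /F /= -natr1; field.
rewrite (telescope_sumr_eq H _ (leq0n j)) => [|c /andP[_ cj]]; last first.
  by rewrite -(mulr_natr _ (k.+1 - c - j)) !natrB /H /= -?natr1; try lia; field.
by rewrite /F /H /gap_poly /=; field.
Qed.

Lemma deficit_lt_surplus_Ak (x : R) : 0 <= x <= 2^-1 -> x ^+ 3 - x + 3^-1 = 0 ->
  forall b, 0 <= b -> b < x - k%:R^-1 / 2 -> deficit A1 A2 b < surplus A1 b.
Proof.
move=> x01 root b b0 bx; have [x0 x1] := andP x01.
have K1 : 1 <= k%:R :> R by rewrite ler1n.
have hK : 0 < k%:R^-1 :> R by rewrite invr_gt0; lra.
have b1 : b <= 1 by lra.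
have [j _ thr] := Ak_threshold b1.
have tj : b * k%:R <= j%:R by move: (thr j); rewrite leqnn ler_pdivlMr ?ltr0n // => ->.
have jt : j%:R - 1 < b * k%:R.
  case: j thr tj => [|j] thr tj; first by rewrite sub0r; nra.
  have := thr j; rewrite ltnn => /negbT; rewrite -ltNge ltr_pdivrMr ?ltr0n //.
  by rewrite -natr1 addrK.
have tx : b * k%:R < k%:R * x - 2^-1.
  have -> : k%:R * x - 2^-1 = (x - k%:R^-1 / 2) * k%:R by field; lra.
  by rewrite ltr_pM2r ?ltr0n.
have jk : (j + j <= k)%N.
  by rewrite -ltnS -(ltr_nat R) natrD -natr1; nra.
have t0 : 0 <= b * k%:R by rewrite mulr_ge0 ?ler0n.
have := cubic_gap_pos x01 root K1 t0 jt tj tx.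
by rewrite -(surplus_sub_deficit_Ak thr jk) pmulr_lgt0 ?subr_gt0 // mulr_gt0 ?ltr0n.
Qed.

Lemma deficit_lt_surplus_Ak_swap (x : R) : 0 <= x <= 2^-1 -> x ^+ 3 - x + 3^-1 = 0 ->
  forall b, 0 <= b -> b < x - k%:R^-1 / 2 -> deficit A2 A1 b < surplus A2 b.
Proof.
move=> x01 root b b0 bx; have := deficit_lt_surplus_Ak x01 root b0 bx.
rewrite /deficit /surplus.
rewrite (sum_Ak_swap (fun u v => if (u < b) && (b <= v) then b - u else 0)).
by rewrite (sum_Ak_swap (fun u _ => if b <= u then u - b else 0)).
Qed.

Lemma Ak_point (c e : nat) : (c + e <= k)%N ->
  exists p : Aidx k, A1 p = c%:R / k%:R /\ A2 p = e%:R / k%:R.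
Proof.
move=> cek; have ck : (c < k.+1)%N by lia.
have ek : (e < k.+1)%N by lia.
by exists (exist _ (Ordinal ck, Ordinal ek) cek).
Qed.

Lemma Ak_bracket (m : R) : 0 <= m -> m < 1 ->
  exists c : nat, [/\ (0 < c)%N, (c.-1)%:R / k%:R <= m & m < c%:R / k%:R].
Proof.
move=> m0 m1; have kk : k%:R / k%:R = 1 :> R by rewrite divff ?pnatr_eq0 -?lt0n.
have mk : m < k%:R / k%:R by rewrite kk.
have mono a b : (a <= b)%N -> m < a%:R / k%:R -> m < b%:R / k%:R.
  by move=> ab /lt_le_trans; apply; rewrite ler_pM2r ?invr_gt0 ?ltr0n // ler_nat.
have [c _ thr] := ex_threshold (P := fun n => m < n%:R / k%:R) mk mono.
have c0 : (0 < c)%N.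
  by rewrite lt0n; apply/eqP => c_eq0; move: (thr 0%N); rewrite c_eq0 leqnn mul0r ltNge m0.
exists c; split; rewrite ?thr //.
by rewrite leNgt thr -ltnS prednK ?ltnn.
Qed.

Lemma Ak_frontier (m1 m2 : R) : 0 <= m1 -> 0 <= m2 ->
  (forall p, A1 p <= m1 \/ A2 p <= m2) -> 1 - k%:R^-1 <= m1 + m2.
Proof.
move=> m10 m20 undom; rewrite leNgt; apply/negP => m_lt.
have hK : 0 < k%:R^-1 :> R by rewrite invr_gt0 ltr0n.
have m11 : m1 < 1 by lra.
have m21 : m2 < 1 by lra.
have [c [c0 c_le c_gt]] := Ak_bracket m10 m11.
have [e [e0 e_le e_gt]] := Ak_bracket m20 m21.
have ce : (k < c + e)%N.
  rewrite ltnNge; apply/negP => /Ak_point[p [p1 p2]].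
  by case: (undom p); rewrite ?p1 ?p2 leNgt ?c_gt ?e_gt.
have sum_ge : (k%:R - 1) / k%:R <= m1 + m2.
  apply: le_trans (lerD c_le e_le); rewrite -mulrDl ler_pM2r ?invr_gt0 ?ltr0n //.
  by rewrite lerBlDr -natrD natr1 ler_nat; lia.
move: m_lt; have -> : 1 - k%:R^-1 = (k%:R - 1) / k%:R :> R.
  by field; rewrite pnatr_eq0 -lt0n.
by rewrite ltNge sum_ge.
Qed.

Lemma avg_Ak_simplex (S : {set Aidx k}) : in_simplex (avg S A1) (avg S A2).
Proof.
split; [apply: avg_ge0 => p _; apply: Ak1_ge0 | apply: avg_ge0 => p _; apply: Ak2_ge0 |].
by rewrite -avgD; apply: avg_le => // p _; apply: Ak_sum_le1.
Qed.

Lemma SA_payoff_Ak_simplex (d : R) (L1 L2 : {set Aidx k}) : 0 <= d <= 1 ->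
  in_simplex (SA_payoff d L1 L2 A1) (SA_payoff d L1 L2 A2).
Proof.
move=> d01; split; [exact: SA_payoff_ge0 _ d01 Ak1_ge0 |
  exact: SA_payoff_ge0 _ d01 Ak2_ge0 |].
by rewrite -SA_payoffD; apply: SA_payoff_le => // p; apply: Ak_sum_le1.
Qed.

Lemma avg_stable_Ak_lower (x : R) (U : {set Aidx k}) :
  0 <= x <= 2^-1 -> x ^+ 3 - x + 3^-1 = 0 -> avg_stable A1 A2 U ->
  x - k%:R^-1 / 2 <= avg U A1 /\ x - k%:R^-1 / 2 <= avg U A2.
Proof.
move=> x01 root [out_le in_ge].
have [le12|lt21] := lerP (avg U A1) (avg U A2).
  suff lb : x - k%:R^-1 / 2 <= avg U A1 by split; last exact: le_trans le12.
  apply: (avg_lower_bound (deficit_lt_surplus_Ak x01 root)) => j.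
  - exact: Ak1_ge0.
  - by case/out_le.
  - by case/in_ge => [|/(le_trans le12)]; [left|right].
suff lb : x - k%:R^-1 / 2 <= avg U A2 by split; first exact: le_trans (ltW lt21).
apply: (avg_lower_bound (deficit_lt_surplus_Ak_swap x01 root)) => j.
- exact: Ak2_ge0.
- by case/out_le.
- by case/in_ge => [/(le_trans (ltW lt21))|]; [right|left].
Qed.

Lemma SA_NE_Ak_nonempty (d : R) (L1 L2 : {set Aidx k}) :
  SA_pure_NE d A1 A2 L1 L2 -> L1 :|: L2 != set0.
Proof.
case=> best1 _; apply: contraT; rewrite negbK setU_eq0 => /andP[/eqP L10 /eqP L20].
have [p0 [p01 _]] := @Ak_point 0 0 (leq0n k).
have [p1 [p11 _]] := @Ak_point k 0 (eq_leq (addn0 k)).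
have := br_empty best1 L10 L20; move=> /[dup] /(_ p0) <- /(_ p1).
by rewrite p01 p11 mul0r divff ?pnatr_eq0 -?lt0n // => /eqP; rewrite oner_eq0.
Qed.

End Ak.

Theorem proposition1 (R : rcfType) (x : R)
  (hx : 0 <= x <= 2^-1) (hroot : x ^+ 3 - x + 3^-1 = 0)
  (k : nat) (hk : (0 < k)%N) (delta : R) (hd : 0 < delta <= 1)
  (L1 L2 : {set Aidx k}) :
  SA_pure_NE delta (@Ak1 R k) (@Ak2 R k) L1 L2 ->
  close_to_segment (delta + k%:R^-1) (x, 1 - x) (1 - x, x)
    (SA_payoff delta L1 L2 (@Ak1 R k), SA_payoff delta L1 L2 (@Ak2 R k)).
Proof.
move=> NE; have [d_gt0 d_le1] := andP hd.
have x_lt : 0 <= x < 2^-1.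
  by have := root_le_two_fifths hx hroot; case/andP: hx => x0 _; rewrite x0 /=; lra.
have k_inv : 0 < k%:R^-1 :> R by rewrite invr_gt0 ltr0n.
have [d1|d_neq1] := eqVneq delta 1.
  apply: close_to_segment_simplex => //; first lra.
  by apply: (SA_payoff_Ak_simplex hk); rewrite (ltW d_gt0).
have d_lt1 : delta < 1 by rewrite lt_neqAle d_neq1.
have [S [lam [lam_d pay stable [le1 le2] undom]]] :=
  SA_NE_decomposition d_gt0 d_lt1 NE (SA_NE_Ak_nonempty hk NE).
have [lb1 lb2] := avg_stable_Ak_lower hk hx hroot stable.
have [m1_ge0 m2_ge0 m_le1] := avg_Ak_simplex R hk S.
have front := Ak_frontier hk m1_ge0 m2_ge0 undom.
rewrite !pay; apply: (close_to_segment_mix (h := k%:R^-1)) => //; try lra.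
exact: (avg_Ak_simplex R hk).
Qed.
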